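(* The lattice $K$ (defined in the context) is infinite, is generated as a lattice by the three elements $a=A_0$, $b=B_0$, $c=C$, and is $2$-modular.
   Context: Let $P=\{c\}\cup\{a_n:n<\omega\}\cup\{b_n:n<\omega\}$ be a set of distinct symbols. For $m,n<\omega$ put $A_m=\{a_k:k\geq m\}$, $B_n=\{b_k:k\geq n\}$, $C=\{c\}$. The lattice $K$ is the set consisting of $\varnothing$, $C$, all $A_m$, all $B_n$ ($m,n<\omega$), and all sets $C\cup A_m\cup B_n$ with $m,n<\omega$ and $|m-n|\leq 1$, ordered by inclusion (meets are intersections; $\varnothing$ is the zero and $C\cup A_0\cup B_0$ is the top). Equivalently, $K$ has join-irreducible elements $c$, $a_n$, $b_n$ ($n<\omega$) with $a_0>a_1>a_2>\cdots$, $b_0>b_1>\cdots$, these chains and $c$ mutually incomparable, and the only nontrivial join-covers among them being $c<a_m\vee b_n$, $a_{m}<b_n\vee c$ and $b_{m}<a_n\vee c$ for $m>n$. For a lattice $L$, define $u\mapsto u^{(1)}$ on $L^3$ by $\langle x,y,z\rangle^{(1)}=\langle x\vee(y\wedge z),\,y\vee(x\wedge z),\,z\vee(x\wedge y)\rangle$, and $u^{(0)}=u$, $u^{(k+1)}=(u^{(k)})^{(1)}$. For a positive integer $h$, $L$ is $h$-modular if $u^{(h+1)}=u^{(h)}$ for all $u\in L^3$. *)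

From Stdlib Require Import Arith List.

Inductive P : Type :=
| pc : P
| pa : nat -> P
| pb : nat -> P.

Definition Kset := P -> Prop.

Definition Empty : Kset := fun _ => False.
Definition Cset : Kset := fun p => p = pc.
Definition Aset (m : nat) : Kset :=
  fun p => match p with pa k => m <= k | _ => False end.
Definition Bset (n : nat) : Kset :=
  fun p => match p with pb k => n <= k | _ => False end.
Definition CAB (m n : nat) : Kset :=
  fun p => Cset p \/ Aset m p \/ Bset n p.

Definition inK (X : Kset) : Prop :=
  X = Empty \/ X = Cset \/ (exists m, X = Aset m) \/ (exists n, X = Bset n)
  \/ (exists m n, (m <= n + 1 /\ n <= m + 1) /\ X = CAB m n).

Definition subset (X Y : Kset) : Prop := forall p, X p -> Y p.

Definition meetK (X Y : Kset) : Kset := fun p => X p /\ Y p.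
Definition joinK (X Y : Kset) : Kset :=
  fun p => forall Z, inK Z -> subset X Z -> subset Y Z -> Z p.

Inductive gen_abc : Kset -> Prop :=
| gen_a : gen_abc (Aset 0)
| gen_b : gen_abc (Bset 0)
| gen_c : gen_abc Cset
| gen_meet : forall X Y, gen_abc X -> gen_abc Y -> gen_abc (meetK X Y)
| gen_join : forall X Y, gen_abc X -> gen_abc Y -> gen_abc (joinK X Y).

Definition step (u : Kset * Kset * Kset) : Kset * Kset * Kset :=
  let '(x, y, z) := u in
  (joinK x (meetK y z), joinK y (meetK x z), joinK z (meetK x y)).

Fixpoint iter_step (k : nat) (u : Kset * Kset * Kset) : Kset * Kset * Kset :=
  match k with
  | 0 => u
  | S k' => step (iter_step k' u)
  end.

Definition h_modular_K (h : nat) : Prop :=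
  forall x y z, inK x -> inK y -> inK z ->
    iter_step (S h) (x, y, z) = iter_step h (x, y, z).

Definition K_infinite : Prop :=
  ~ exists l : list Kset, forall X, inK X -> In X l.

(* Every member of K is one of ∅, C, A_m, B_n or C ∪ A_m ∪ B_n, so K is faithfully
   coded by five constructors with natural-number indices, on which meets and joins
   are explicit max/min formulas. Iterating u ↦ u^(1) on coded triples is then a
   finite case distinction over linear inequalities between at most six indices,
   which settles 2-modularity. Generation follows from
   A_(m+1) = a ∧ (B_m ∨ c), B_(n+1) = b ∧ (A_n ∨ c) and C ∪ A_m ∪ B_n = A_m ∨ B_n
   for |m - n| ≤ 1; infiniteness from the pairwise distinct A_m. *)
From Stdlib Require Import Arith List Lia.
From Stdlib Require Import FunctionalExtensionality PropExtensionality.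

Lemma Kset_ext (X Y : Kset) : (forall p, X p <-> Y p) -> X = Y.
Proof.
  intros H; extensionality p; apply propositional_extensionality, H.
Qed.

Lemma joinK_eq (X Y Z : Kset) :
  inK Z -> subset X Z -> subset Y Z ->
  (forall W, inK W -> subset X W -> subset Y W -> subset Z W) ->
  joinK X Y = Z.
Proof.
  intros HZ HXZ HYZ Hleast; apply Kset_ext; intros p; split.
  - intros Hp; exact (Hp Z HZ HXZ HYZ).
  - intros Hp W HW HXW HYW; exact (Hleast W HW HXW HYW p Hp).
Qed.

Lemma not_listable_of_injective {T : Type} (Q : T -> Prop) (f : nat -> T) :
  (forall m n, f m = f n -> m = n) -> (forall n, Q (f n)) ->
  ~ exists l : list T, forall x, Q x -> In x l.
Proof.
  intros Hinj HQ [l Hl].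
  set (prefix := map f (seq 0 (S (length l)))).
  assert (Hnodup : NoDup prefix).
  { apply NoDup_map_NoDup_ForallPairs; [intros m n _ _; apply Hinj | apply seq_NoDup]. }
  assert (Hincl : incl prefix l).
  { intros x Hx; apply in_map_iff in Hx as [n [<- _]]; apply Hl, HQ. }
  pose proof (NoDup_incl_length Hnodup Hincl) as Hlen.
  unfold prefix in Hlen; rewrite length_map, length_seq in Hlen; lia.
Qed.

Inductive Kcode : Type := Kbot | Kc | Ka (m : nat) | Kb (n : nat) | Kcab (m n : nat).

Definition valid (x : Kcode) : Prop :=
  match x with Kcab m n => m <= S n /\ n <= S m | _ => True end.

Definition Kset_of (x : Kcode) : Kset :=
  match x with
  | Kbot => Empty
  | Kc => Cset
  | Ka m => Aset m
  | Kb n => Bset n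
  | Kcab m n => CAB m n
  end.

Definition Kle (x y : Kcode) : Prop :=
  match x, y with
  | Kbot, _ => True
  | Kc, (Kc | Kcab _ _) => True
  | Ka m, (Ka m' | Kcab m' _) => m' <= m
  | Kb n, (Kb n' | Kcab _ n') => n' <= n
  | Kcab m n, Kcab m' n' => m' <= m /\ n' <= n
  | _, _ => False
  end.

Definition Kmeet (x y : Kcode) : Kcode :=
  match x, y with
  | Kbot, _ | _, Kbot => Kbot
  | Kc, Kc | Kc, Kcab _ _ | Kcab _ _, Kc => Kc
  | Kc, (Ka _ | Kb _) | (Ka _ | Kb _), Kc => Kbot
  | Ka m, Ka m' | Ka m, Kcab m' _ | Kcab m' _, Ka m => Ka (max m m')
  | Kb n, Kb n' | Kb n, Kcab _ n' | Kcab _ n', Kb n => Kb (max n n')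
  | Ka _, Kb _ | Kb _, Ka _ => Kbot
  | Kcab m n, Kcab m' n' => Kcab (max m m') (max n n')
  end.

Definition Kjoin (x y : Kcode) : Kcode :=
  match x, y with
  | Kbot, z | z, Kbot => z
  | Kc, Kc => Kc
  | Kc, Ka m | Ka m, Kc => Kcab m (S m)
  | Kc, Kb n | Kb n, Kc => Kcab (S n) n
  | Kc, Kcab m n | Kcab m n, Kc => Kcab m n
  | Ka m, Ka m' => Ka (min m m')
  | Kb n, Kb n' => Kb (min n n')
  | Ka m, Kb n | Kb n, Ka m => Kcab (min m (S n)) (min n (S m))
  | Ka m, Kcab m' n | Kcab m' n, Ka m => Kcab (min m m') (min n (S m))
  | Kb n, Kcab m n' | Kcab m n', Kb n => Kcab (min m (S n)) (min n n')
  | Kcab m n, Kcab m' n' => Kcab (min m m') (min n n')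
  end.

Lemma inK_iff_code (X : Kset) : inK X <-> exists x, valid x /\ X = Kset_of x.
Proof.
  split.
  - intros [->|[->|[[m ->]|[[n ->]|[m [n [Hmn ->]]]]]]].
    + exists Kbot; easy.
    + exists Kc; easy.
    + exists (Ka m); easy.
    + exists (Kb n); easy.
    + exists (Kcab m n); cbn; split; [lia | reflexivity].
  - intros [[| |m|n|m n] [Hx ->]]; unfold inK; cbn in *.
    + now left.
    + now right; left.
    + now right; right; left; exists m.
    + now right; right; right; left; exists n.
    + right; right; right; right; exists m, n; split; [lia | reflexivity].
Qed.

Lemma inK_Kset_of (x : Kcode) : valid x -> inK (Kset_of x).
Proof. intros Hx; apply inK_iff_code; now exists x. Qed.

Ltac unfold_Kset_of := cbn [Kset_of] in *; unfold Empty, Cset, Aset, Bset, CAB in *; cbn in *.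

Lemma Kle_subset (x y : Kcode) : Kle x y -> subset (Kset_of x) (Kset_of y).
Proof.
  intros Hxy p; destruct x, y, p; unfold_Kset_of;
    intuition (try discriminate; lia).
Qed.

(* It suffices to test the least points c, a_m, b_n of [Kset_of x]. *)
Lemma subset_Kle (x y : Kcode) : subset (Kset_of x) (Kset_of y) -> Kle x y.
Proof.
  intros Hxy.
  assert (Hc : Kset_of x pc -> Kset_of y pc) by apply Hxy.
  destruct x as [| |m|n|m n].
  - exact I.
  - specialize (Hc eq_refl); destruct y; unfold_Kset_of; intuition discriminate.
  - specialize (Hxy (pa m) (le_n m)); destruct y; unfold_Kset_of;
      intuition (try discriminate; lia).
  - specialize (Hxy (pb n) (le_n n)); destruct y; unfold_Kset_of;
      intuition (try discriminate; lia).
  - pose proof (Hxy (pa m) (or_intror (or_introl (le_n m)))) as Ha.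
    pose proof (Hxy (pb n) (or_intror (or_intror (le_n n)))) as Hb.
    specialize (Hc (or_introl eq_refl)).
    destruct y; unfold_Kset_of; intuition (try discriminate; lia).
Qed.

Lemma Kmeet_valid (x y : Kcode) : valid x -> valid y -> valid (Kmeet x y).
Proof. destruct x, y; cbn; lia. Qed.

Lemma Kjoin_valid (x y : Kcode) : valid x -> valid y -> valid (Kjoin x y).
Proof. destruct x, y; cbn; lia. Qed.

Lemma Kle_join_l (x y : Kcode) : Kle x (Kjoin x y).
Proof. destruct x, y; cbn; lia. Qed.

Lemma Kle_join_r (x y : Kcode) : Kle y (Kjoin x y).
Proof. destruct x, y; cbn; lia. Qed.

Lemma Kjoin_least (x y z : Kcode) : valid z -> Kle x z -> Kle y z -> Kle (Kjoin x y) z.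
Proof. destruct x, y, z; cbn; lia. Qed.

Lemma meetK_Kset_of (x y : Kcode) : meetK (Kset_of x) (Kset_of y) = Kset_of (Kmeet x y).
Proof.
  apply Kset_ext; intros p; unfold meetK.
  destruct x, y, p; cbn; unfold_Kset_of; intuition (try discriminate; lia).
Qed.

Lemma joinK_Kset_of (x y : Kcode) :
  valid x -> valid y -> joinK (Kset_of x) (Kset_of y) = Kset_of (Kjoin x y).
Proof.
  intros Hx Hy; apply joinK_eq.
  - apply inK_Kset_of, Kjoin_valid; assumption.
  - apply Kle_subset, Kle_join_l.
  - apply Kle_subset, Kle_join_r.
  - intros W HW HxW HyW; apply inK_iff_code in HW as [z [Hz ->]].
    apply Kle_subset, Kjoin_least; [| apply subset_Kle ..]; assumption.
Qed.

Lemma inK_meetK (X Y : Kset) : inK X -> inK Y -> inK (meetK X Y).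
Proof.
  intros HX HY.
  apply inK_iff_code in HX as [x [Hx ->]]; apply inK_iff_code in HY as [y [Hy ->]].
  rewrite meetK_Kset_of; apply inK_Kset_of, Kmeet_valid; assumption.
Qed.

Lemma inK_joinK (X Y : Kset) : inK X -> inK Y -> inK (joinK X Y).
Proof.
  intros HX HY.
  apply inK_iff_code in HX as [x [Hx ->]]; apply inK_iff_code in HY as [y [Hy ->]].
  rewrite joinK_Kset_of by assumption; apply inK_Kset_of, Kjoin_valid; assumption.
Qed.

Lemma gen_abc_inK (X : Kset) : gen_abc X -> inK X.
Proof.
  induction 1; auto using inK_meetK, inK_joinK.
  - now apply (inK_Kset_of (Ka 0)).
  - now apply (inK_Kset_of (Kb 0)).
  - now apply (inK_Kset_of Kc).
Qed.

Lemma gen_abc_Kmeet (x y : Kcode) :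
  gen_abc (Kset_of x) -> gen_abc (Kset_of y) -> gen_abc (Kset_of (Kmeet x y)).
Proof. intros; rewrite <- meetK_Kset_of; constructor; assumption. Qed.

Lemma gen_abc_Kjoin (x y : Kcode) : valid x -> valid y ->
  gen_abc (Kset_of x) -> gen_abc (Kset_of y) -> gen_abc (Kset_of (Kjoin x y)).
Proof. intros; rewrite <- joinK_Kset_of by assumption; constructor; assumption. Qed.

Lemma gen_abc_Aset_Bset (m : nat) : gen_abc (Aset m) /\ gen_abc (Bset m).
Proof.
  induction m as [|m [HA HB]]; [split; constructor|].
  split.
  - change (Aset (S m)) with (Kset_of (Kmeet (Ka 0) (Kjoin (Kb m) Kc))).
    apply gen_abc_Kmeet; [constructor|].
    apply gen_abc_Kjoin; [exact I | exact I | exact HB | constructor].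
  - change (Bset (S m)) with (Kset_of (Kmeet (Kb 0) (Kjoin (Ka m) Kc))).
    apply gen_abc_Kmeet; [constructor|].
    apply gen_abc_Kjoin; [exact I | exact I | exact HA | constructor].
Qed.

Lemma gen_abc_Kset_of (x : Kcode) : valid x -> gen_abc (Kset_of x).
Proof.
  destruct x as [| |m|n|m n]; cbn; intros Hx.
  - change Empty with (Kset_of (Kmeet (Ka 0) (Kb 0))).
    apply gen_abc_Kmeet; constructor.
  - constructor.
  - apply gen_abc_Aset_Bset.
  - apply gen_abc_Aset_Bset.
  - replace (CAB m n) with (Kset_of (Kjoin (Ka m) (Kb n))) by (cbn; f_equal; lia).
    apply gen_abc_Kjoin; [exact I | exact I | apply gen_abc_Aset_Bset ..].
Qed.

Lemma inK_gen_abc (X : Kset) : inK X -> gen_abc X.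
Proof. intros HX; apply inK_iff_code in HX as [x [Hx ->]]; apply gen_abc_Kset_of, Hx. Qed.

Definition Kstep (u : Kcode * Kcode * Kcode) : Kcode * Kcode * Kcode :=
  let '(x, y, z) := u in
  (Kjoin x (Kmeet y z), Kjoin y (Kmeet x z), Kjoin z (Kmeet x y)).

Definition valid3 (u : Kcode * Kcode * Kcode) : Prop :=
  let '(x, y, z) := u in valid x /\ valid y /\ valid z.

Definition Kset3_of (u : Kcode * Kcode * Kcode) : Kset * Kset * Kset :=
  let '(x, y, z) := u in (Kset_of x, Kset_of y, Kset_of z).

Lemma Kstep_valid (u : Kcode * Kcode * Kcode) : valid3 u -> valid3 (Kstep u).
Proof.
  destruct u as [[x y] z]; cbn; intros (Hx & Hy & Hz).
  auto using Kjoin_valid, Kmeet_valid.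
Qed.

Lemma step_Kset3_of (u : Kcode * Kcode * Kcode) :
  valid3 u -> step (Kset3_of u) = Kset3_of (Kstep u).
Proof.
  destruct u as [[x y] z]; cbn; intros (Hx & Hy & Hz).
  rewrite !meetK_Kset_of, !joinK_Kset_of by auto using Kmeet_valid; reflexivity.
Qed.

Lemma iter_Kstep_valid (k : nat) (u : Kcode * Kcode * Kcode) :
  valid3 u -> valid3 (Nat.iter k Kstep u).
Proof. intros Hu; induction k as [|k IH]; [exact Hu | apply Kstep_valid, IH]. Qed.

Lemma iter_step_Kset3_of (k : nat) (u : Kcode * Kcode * Kcode) :
  valid3 u -> iter_step k (Kset3_of u) = Kset3_of (Nat.iter k Kstep u).
Proof.
  intros Hu; induction k as [|k IH]; [reflexivity|].
  cbn [iter_step Nat.iter]; rewrite IH; apply step_Kset3_of, iter_Kstep_valid, Hu.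
Qed.

Ltac no_min_max t :=
  lazymatch t with
  | context [Nat.min _ _] => fail
  | context [Nat.max _ _] => fail
  | _ => idtac
  end.

(* Rewrites innermost min/max away, splitting cases only when lia cannot decide the
   comparison from the hypotheses. *)
Ltac elim_min_max :=
  repeat match goal with
  | |- context [Nat.min ?a ?b] => no_min_max a; no_min_max b;
      first [ rewrite (Nat.min_l a b) by lia | rewrite (Nat.min_r a b) by lia
            | destruct (Nat.le_ge_cases a b);
              [ rewrite (Nat.min_l a b) by assumption | rewrite (Nat.min_r a b) by assumption ] ]
  | |- context [Nat.max ?a ?b] => no_min_max a; no_min_max b;
      first [ rewrite (Nat.max_r a b) by lia | rewrite (Nat.max_l a b) by lia
            | destruct (Nat.le_ge_cases a b);
              [ rewrite (Nat.max_r a b) by assumption | rewrite (Nat.max_l a b) by assumption ] ]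
  end.

Lemma Kstep_2_stable (u : Kcode * Kcode * Kcode) :
  valid3 u -> Kstep (Kstep (Kstep u)) = Kstep (Kstep u).
Proof.
  destruct u as [[[| |?|?|? ?] [| |?|?|? ?]] [| |?|?|? ?]]; cbn [valid3 valid]; intros;
    cbn [Kstep Kjoin Kmeet]; elim_min_max; reflexivity.
Qed.

Lemma Aset_inj (m n : nat) : Aset m = Aset n -> m = n.
Proof.
  intros H.
  assert (Aset n (pa m)) by (rewrite <- H; apply le_n).
  assert (Aset m (pa n)) by (rewrite H; apply le_n).
  cbn in *; lia.
Qed.

Theorem theorem4p5 :
  K_infinite /\ (forall X, inK X <-> gen_abc X) /\ h_modular_K 2.
Proof.
  split; [|split].
  - apply (not_listable_of_injective inK Aset Aset_inj).
    intros m; now apply (inK_Kset_of (Ka m)).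
  - intros X; split; [apply inK_gen_abc | apply gen_abc_inK].
  - intros X Y Z HX HY HZ.
    apply inK_iff_code in HX as [x [Hx ->]], HY as [y [Hy ->]], HZ as [z [Hz ->]].
    assert (Hu : valid3 (x, y, z)) by easy.
    change (Kset_of x, Kset_of y, Kset_of z) with (Kset3_of (x, y, z)).
    rewrite !iter_step_Kset3_of by exact Hu.
    f_equal; exact (Kstep_2_stable _ Hu).
Qed.
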